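(* Let $\xi=(\tau_L,\delta_L,\tau_R,\delta_R)\in\Phi_{\rm BYG}$ and suppose $J_1(\xi)>1$ and $\lambda_L^s+|\lambda_R^s|<1$. Let $\alpha\subset\Omega$ be a line segment with slope in $K=[-\lambda_L^s,|\lambda_R^s|]$. Then there exist $n\ge1$ and points $P$ on the $y$-axis and $Q$ on the $x$-axis such that the line segment from $P$ to $Q$ is contained in $f_\xi^n(\alpha)$. Moreover, this segment from $P$ to $Q$ intersects the line segment from $V$ to $f_\xi^{-1}(V)$ transversally.
   Context: For $\xi=(\tau_L,\delta_L,\tau_R,\delta_R)\in\mathbb{R}^4$ define $f_\xi(x,y)=(\tau_L x+y+1,\,-\delta_L x)$ if $x\le 0$ and $f_\xi(x,y)=(\tau_R x+y+1,\,-\delta_R x)$ if $x\ge 0$. Let $A_L=\begin{bmatrix}\tau_L&1\\-\delta_L&0\end{bmatrix}$, $A_R=\begin{bmatrix}\tau_R&1\\-\delta_R&0\end{bmatrix}$, $\Phi=\{\xi: \tau_L>\delta_L+1,\ \delta_L>0,\ \tau_R<-(\delta_R+1),\ \delta_R>0\}$. For $\xi\in\Phi$ the eigenvalues of $A_L$ are real with $0<\lambda_L^s<1<\lambda_L^u$, those of $A_R$ are real with $\lambda_R^u<-1<\lambda_R^s<0$, $f_\xi$ is a homeomorphism, and $Y=\left(\frac{-1}{\tau_L-\delta_L-1},\frac{\delta_L}{\tau_L-\delta_L-1}\right)$ is a fixed point. Let $\phi(\xi)=\delta_R-\left(\tau_R+\delta_L+\delta_R-(1+\tau_R)\lambda_L^u\right)\lambda_L^u$,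 $\Phi_{\rm BYG}=\{\xi\in\Phi:\phi(\xi)>0\}$, and $J_1(\xi)=\frac{\lambda_L^u(\lambda_R^u)^2}{\lambda_L^u+|\lambda_R^u|}$. Let $D=\left(\frac{1}{1-\lambda_L^s},0\right)$. Let $E^s(Y)$ be the line through $Y$ in the direction of an eigenvector of $A_L$ for $\lambda_L^s$, let $B$ be the intersection of the line segment from $Y$ to $D$ with the line through $f_\xi(D)$ parallel to $E^s(Y)$, and let $\Omega$ be the filled triangle with vertices $D$, $f_\xi(D)$, $B$. Let $V=\left(0,\frac{-\lambda_R^u}{\lambda_R^u-1}\right)$. A line segment has slope $m$ if it is parallel to $(1,m)$. *)

From Stdlib Require Import Reals Lra.
Open Scope R_scope.

Definition pt := (R * R)%type.

Record param := mkParam { tauL : R; deltaL : R; tauR : R; deltaR : R }.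

(* The piecewise-linear map f_xi (both formulas agree at x = 0). *)
Definition f (xi : param) (p : pt) : pt :=
  let (x, y) := p in
  if Rle_dec x 0 then (tauL xi * x + y + 1, - deltaL xi * x)
  else (tauR xi * x + y + 1, - deltaR xi * x).

(* Its inverse (valid when deltaL, deltaR > 0): the preimage x-coordinate
   is -w/delta, whose sign is that of -w. *)
Definition finv (xi : param) (q : pt) : pt :=
  let (u, w) := q in
  if Rle_dec 0 w then
    let x := - w / deltaL xi in (x, u - 1 - tauL xi * x)
  else
    let x := - w / deltaR xi in (x, u - 1 - tauR xi * x).

Definition in_Phi (xi : param) : Prop :=
  tauL xi > deltaL xi + 1 /\ deltaL xi > 0 /\
  tauR xi < - (deltaR xi + 1) /\ deltaR xi > 0.

Definition discL xi := tauL xi ^ 2 - 4 * deltaL xi.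
Definition discR xi := tauR xi ^ 2 - 4 * deltaR xi.
Definition lamLs xi := (tauL xi - sqrt (discL xi)) / 2.  (* 0 < . < 1 *)
Definition lamLu xi := (tauL xi + sqrt (discL xi)) / 2.  (* > 1 *)
Definition lamRu xi := (tauR xi - sqrt (discR xi)) / 2.  (* < -1 *)
Definition lamRs xi := (tauR xi + sqrt (discR xi)) / 2.  (* in (-1,0) *)

Definition phi (xi : param) : R :=
  deltaR xi - (tauR xi + deltaL xi + deltaR xi - (1 + tauR xi) * lamLu xi) * lamLu xi.

Definition in_Phi_BYG (xi : param) : Prop := in_Phi xi /\ phi xi > 0.

Definition J1 (xi : param) : R :=
  lamLu xi * (lamRu xi) ^ 2 / (lamLu xi + Rabs (lamRu xi)).

Definition Y (xi : param) : pt :=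
  (-1 / (tauL xi - deltaL xi - 1), deltaL xi / (tauL xi - deltaL xi - 1)).

Definition D (xi : param) : pt := (1 / (1 - lamLs xi), 0).

Definition V (xi : param) : pt := (0, - lamRu xi / (lamRu xi - 1)).

Definition evLs (xi : param) : pt := (1, lamLs xi - tauL xi).

Definition padd (p q : pt) : pt := (fst p + fst q, snd p + snd q).
Definition psub (p q : pt) : pt := (fst p - fst q, snd p - snd q).
Definition pscale (c : R) (p : pt) : pt := (c * fst p, c * snd p).
Definition cross (p q : pt) : R := fst p * snd q - snd p * fst q.

(* Intersection of the line through P1, P2 with the line through Q of direction v. *)
Definition line_inter (P1 P2 Q v : pt) : pt :=
  padd P1 (pscale (cross (psub Q P1) v / cross (psub P2 P1) v) (psub P2 P1)).

Definition B (xi : param) : pt :=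
  line_inter (Y xi) (D xi) (f xi (D xi)) (evLs xi).

Definition segment (P Q : pt) : pt -> Prop :=
  fun z => exists t, 0 <= t <= 1 /\ z = padd P (pscale t (psub Q P)).

Definition triangle (a b c : pt) : pt -> Prop :=
  fun z => exists s t u, 0 <= s /\ 0 <= t /\ 0 <= u /\ s + t + u = 1 /\
    z = padd (pscale s a) (padd (pscale t b) (pscale u c)).

Definition Omega (xi : param) : pt -> Prop := triangle (D xi) (f xi (D xi)) (B xi).

Definition image_iter (xi : param) (n : nat) (S : pt -> Prop) : pt -> Prop :=
  fun z => exists p, S p /\ z = Nat.iter n (f xi) p.

Definition transversal (P1 P2 Q1 Q2 : pt) : Prop :=
  (exists z, segment P1 P2 z /\ segment Q1 Q2 z) /\
  cross (psub P2 P1) (psub Q2 Q1) <> 0.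

(* Omega is the triangle bounded by the unstable line E^u(Y) (which passes through D), the line
   through D and f(D), and the line through f(D) parallel to E^s(Y).  The normals of the first and
   last lines are left eigenvectors of A_L and Y is fixed, which makes f(Omega) <= Omega a direct
   computation; it needs Y strictly on the far side of the last line, which is what phi > 0 says.
   Both A_L and A_R map the cone K of slopes into itself and stretch horizontal widths by at least
   lamLu and |lamRu|.  A piece of f^n(alpha) crossing the y-axis at (0,c) is folded by f onto the
   point (c+1,0) of the x-axis.  Either one half of the fold, possibly after one more iterate, is
   a segment from the y-axis to the x-axis, which crosses [V, f^-1(V)] transversally because
   lamLs + |lamRs| < 1 keeps the points of Omega on the y-axis above V; or two iterates later
   some piece is J1 times as wide.  Widths in Omega are bounded, so the widths cannot keep
   growing by the factor min(lamLu, |lamRu|, J1) > 1. *)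

From Stdlib Require Import Reals Lra Lia.
Open Scope R_scope.

Definition affine_fun (al be ga : R) (z : pt) : R := al * fst z + be * snd z + ga.

Lemma affine_fun_lerp al be ga P Q r :
  affine_fun al be ga (padd P (pscale r (psub Q P))) =
  affine_fun al be ga P + r * (affine_fun al be ga Q - affine_fun al be ga P).
Proof. unfold affine_fun, padd, pscale, psub; cbn [fst snd]. ring. Qed.

Lemma segment_affine al be ga P Q z : segment P Q z ->
  exists r, 0 <= r <= 1 /\
    affine_fun al be ga z = (1 - r) * affine_fun al be ga P + r * affine_fun al be ga Q.
Proof.
  intros [r [Hr ->]]. exists r. split; [exact Hr|]. rewrite affine_fun_lerp. ring.
Qed.

Lemma segment_affine_nonneg al be ga P Q z : segment P Q z ->
  0 <= affine_fun al be ga P -> 0 <= affine_fun al be ga Q -> 0 <= affine_fun al be ga z.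
Proof.
  intros Hz HP HQ. destruct (segment_affine al be ga P Q z Hz) as [r [Hr ->]]. nra.
Qed.

Lemma segment_fst_nonpos P Q z : segment P Q z -> fst P <= 0 -> fst Q <= 0 -> fst z <= 0.
Proof.
  intros Hz HP HQ. destruct (segment_affine 1 0 0 P Q z Hz) as [r [Hr Hfst]].
  unfold affine_fun in Hfst. nra.
Qed.

Lemma segment_fst_nonneg P Q z : segment P Q z -> 0 <= fst P -> 0 <= fst Q -> 0 <= fst z.
Proof.
  intros Hz HP HQ. destruct (segment_affine 1 0 0 P Q z Hz) as [r [Hr Hfst]].
  unfold affine_fun in Hfst. nra.
Qed.

Lemma triangle_affine_nonneg (al be ga : R) (A B C z : pt) : triangle A B C z ->
  0 <= affine_fun al be ga A -> 0 <= affine_fun al be ga B -> 0 <= affine_fun al be ga C ->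
  0 <= affine_fun al be ga z.
Proof.
  intros (r & t & w & Hr & Ht & Hw & Hsum & ->) HA HB HC.
  replace (affine_fun al be ga _)
    with (r * affine_fun al be ga A + t * affine_fun al be ga B + w * affine_fun al be ga C).
  - nra.
  - unfold affine_fun, padd, pscale; cbn [fst snd]. replace r with (1 - t - w) by lra. ring.
Qed.

Lemma affine_root_param al be ga P Q r :
  0 <= affine_fun al be ga P -> affine_fun al be ga Q <= 0 ->
  affine_fun al be ga Q < affine_fun al be ga P ->
  r * (affine_fun al be ga P - affine_fun al be ga Q) = affine_fun al be ga P ->
  0 <= r <= 1 /\ affine_fun al be ga (padd P (pscale r (psub Q P))) = 0.
Proof. intros HP HQ Hlt Hr. rewrite affine_fun_lerp. split; [split; nra|lra]. Qed.

Lemma segment_affine_root al be ga P Q :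
  0 <= affine_fun al be ga P -> affine_fun al be ga Q <= 0 ->
  affine_fun al be ga Q < affine_fun al be ga P ->
  exists z, segment P Q z /\ affine_fun al be ga z = 0.
Proof.
  intros HP HQ Hlt.
  set (r := affine_fun al be ga P / (affine_fun al be ga P - affine_fun al be ga Q)).
  assert (Hr : r * (affine_fun al be ga P - affine_fun al be ga Q) = affine_fun al be ga P)
    by (unfold r; field; lra).
  destruct (affine_root_param al be ga P Q r HP HQ Hlt Hr) as [Hr01 Hroot].
  exists (padd P (pscale r (psub Q P))).
  split; [exists r; split; [exact Hr01|reflexivity]|exact Hroot].
Qed.

Lemma segment_meets_y_axis P Q : fst P <= 0 <= fst Q -> fst P < fst Q ->
  exists y, segment P Q (0, y).
Proof.
  intros HPQ Hlt.
  destruct (segment_affine_root (-1) 0 0 P Q) as [[x y] [Hz Hx]];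
    unfold affine_fun in *; cbn [fst snd] in *; try lra.
  exists y. replace x with 0 in Hz by lra. exact Hz.
Qed.

Lemma segment_start P Q : segment P Q P.
Proof. exists 0. split; [lra|]. destruct P, Q. unfold padd, pscale, psub; cbn. f_equal; ring. Qed.

Lemma segment_end P Q : segment P Q Q.
Proof. exists 1. split; [lra|]. destruct P, Q. unfold padd, pscale, psub; cbn. f_equal; ring. Qed.

Lemma segment_sym P Q z : segment P Q z -> segment Q P z.
Proof.
  intros [r [Hr ->]]. exists (1 - r). split; [lra|].
  destruct P, Q. unfold padd, pscale, psub; cbn. f_equal; ring.
Qed.

Lemma segment_sub P Q e1 e2 z :
  segment P Q e1 -> segment P Q e2 -> segment e1 e2 z -> segment P Q z.
Proof.
  intros [r1 [Hr1 ->]] [r2 [Hr2 ->]] [r [Hr ->]].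
  exists ((1 - r) * r1 + r * r2). split; [nra|].
  destruct P, Q. unfold padd, pscale, psub; cbn. f_equal; ring.
Qed.

Lemma cross_affine Q v z :
  cross (psub z Q) v = affine_fun (snd v) (- fst v) (snd Q * fst v - fst Q * snd v) z.
Proof. unfold cross, psub, affine_fun; cbn. ring. Qed.

Lemma line_inter_between P1 P2 Q v :
  0 <= cross (psub P1 Q) v -> cross (psub P2 Q) v <= 0 ->
  cross (psub P2 Q) v < cross (psub P1 Q) v ->
  segment P1 P2 (line_inter P1 P2 Q v) /\ cross (psub (line_inter P1 P2 Q v) Q) v = 0.
Proof.
  set (r := cross (psub Q P1) v / cross (psub P2 P1) v).
  rewrite !cross_affine.
  set (h := affine_fun (snd v) (- fst v) (snd Q * fst v - fst Q * snd v)).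
  intros H1 H2 H12.
  assert (Hr : r * (h P1 - h P2) = h P1).
  { assert (E1 : cross (psub Q P1) v = - h P1)
      by (unfold h, affine_fun, cross, psub; cbn [fst snd]; ring).
    assert (E2 : cross (psub P2 P1) v = h P2 - h P1)
      by (unfold h, affine_fun, cross, psub; cbn [fst snd]; ring).
    unfold r. rewrite E1, E2. field. lra. }
  destruct (affine_root_param _ _ _ P1 P2 r H1 H2 H12 Hr) as [Hr01 Hroot].
  split; [exists r; split; [exact Hr01|reflexivity]|exact Hroot].
Qed.

Lemma transversal_axes_graph (py qx v0 m w : R) :
  0 < m -> 0 < w -> v0 < py -> py <= v0 + m * w -> 0 <= v0 + m * w ->
  0 < qx -> 0 <= v0 + m * qx ->
  transversal (0, py) (qx, 0) (0, v0) (w, v0 + m * w).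
Proof.
  intros Hm Hw Hpy HpyW HW Hqx Hq.
  destruct (segment_affine_root (- m) 1 (- v0) (0, py) (qx, 0)) as [[x y] [Hz Hroot]];
    unfold affine_fun in *; cbn [fst snd] in *; try lra.
  assert (Hx : 0 <= x).
  { destruct (segment_affine 1 0 0 _ _ _ Hz) as [r [Hr Hfst]]. unfold affine_fun in Hfst.
    cbn [fst snd] in Hfst. nra. }
  assert (Hy : y <= v0 + m * w).
  { destruct (segment_affine 0 1 0 _ _ _ Hz) as [r [Hr Hsnd]]. unfold affine_fun in Hsnd.
    cbn [fst snd] in Hsnd. nra. }
  assert (HxW : x <= w) by nra.
  split.
  - exists (x, y). split; [exact Hz|]. exists (x / w).
    assert (Hr : x / w * w = x) by (field; lra). split; [split; nra|].
    replace y with (v0 + m * x) by lra.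
    unfold padd, pscale, psub; cbn [fst snd]. f_equal; field; lra.
  - unfold cross, psub; cbn [fst snd].
    replace ((qx - 0) * (v0 + m * w - v0) - (0 - py) * (w - 0)) with (w * (py + m * qx)) by ring.
    apply Rgt_not_eq. apply Rmult_lt_0_compat; lra.
Qed.

Definition branch (t dl : R) (p : pt) : pt := (t * fst p + snd p + 1, - dl * fst p).

Lemma branch_segment t dl P Q z :
  segment (branch t dl P) (branch t dl Q) z -> exists z', segment P Q z' /\ z = branch t dl z'.
Proof.
  intros [r [Hr ->]]. exists (padd P (pscale r (psub Q P))).
  split; [exists r; split; [exact Hr|reflexivity]|].
  unfold branch, padd, pscale, psub; cbn [fst snd]. f_equal; ring.
Qed.

Lemma branch_slope t dl m p q : snd q - snd p = m * (fst q - fst p) ->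
  fst (branch t dl q) - fst (branch t dl p) = (t + m) * (fst q - fst p) /\
  snd (branch t dl q) - snd (branch t dl p) = - dl * (fst q - fst p).
Proof.
  intros Hm. unfold branch; cbn [fst snd]. split; [|ring].
  transitivity (t * (fst q - fst p) + (snd q - snd p)); [ring|rewrite Hm; ring].
Qed.

Lemma f_on_left xi p : fst p <= 0 -> f xi p = branch (tauL xi) (deltaL xi) p.
Proof.
  destruct p as [x y]; cbn [fst]. intros Hx. unfold f, branch; cbn [fst snd].
  destruct (Rle_dec x 0); [reflexivity|lra].
Qed.

Lemma f_on_right xi p : 0 <= fst p -> f xi p = branch (tauR xi) (deltaR xi) p.
Proof.
  destruct p as [x y]; cbn [fst]. intros Hx. unfold f, branch; cbn [fst snd].
  destruct (Rle_dec x 0); [|reflexivity].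
  replace x with 0 by lra. f_equal; ring.
Qed.

Lemma f_y_axis xi y : f xi (0, y) = (y + 1, 0).
Proof. unfold f. destruct (Rle_dec 0 0); f_equal; ring. Qed.

Lemma f_segment_left xi P Q z : fst P <= 0 -> fst Q <= 0 ->
  segment (f xi P) (f xi Q) z -> exists z', segment P Q z' /\ z = f xi z'.
Proof.
  intros HP HQ Hz. rewrite !f_on_left in Hz by assumption.
  destruct (branch_segment _ _ _ _ _ Hz) as [z' [Hz' ->]].
  exists z'. split; [exact Hz'|]. symmetry. apply f_on_left, (segment_fst_nonpos P Q); assumption.
Qed.

Lemma f_segment_right xi P Q z : 0 <= fst P -> 0 <= fst Q ->
  segment (f xi P) (f xi Q) z -> exists z', segment P Q z' /\ z = f xi z'.
Proof.
  intros HP HQ Hz. rewrite !f_on_right in Hz by assumption.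
  destruct (branch_segment _ _ _ _ _ Hz) as [z' [Hz' ->]].
  exists z'. split; [exact Hz'|]. symmetry. apply f_on_right, (segment_fst_nonneg P Q); assumption.
Qed.

Lemma image_iter_f xi n (A : pt -> Prop) z : image_iter xi n A z -> image_iter xi (S n) A (f xi z).
Proof. intros [p [Hp ->]]. exists p. split; [exact Hp|reflexivity]. Qed.

Lemma saddle_roots (t dl : R) : dl + 1 < t -> 0 < dl ->
  0 < (t - sqrt (t ^ 2 - 4 * dl)) / 2 < 1 /\ 1 < (t + sqrt (t ^ 2 - 4 * dl)) / 2 /\
  (t - sqrt (t ^ 2 - 4 * dl)) / 2 * ((t + sqrt (t ^ 2 - 4 * dl)) / 2) = dl.
Proof.
  intros Ht Hdl.
  assert (Hdisc : 0 < t ^ 2 - 4 * dl).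
  { replace (t ^ 2 - 4 * dl) with ((t - dl - 1) * (t + dl + 1) + (dl - 1) ^ 2) by ring.
    assert (0 < (t - dl - 1) * (t + dl + 1)) by (apply Rmult_lt_0_compat; lra).
    pose proof (pow2_ge_0 (dl - 1)). lra. }
  pose proof (sqrt_lt_R0 _ Hdisc) as Hr0. pose proof (sqrt_sqrt _ (Rlt_le _ _ Hdisc)) as Hrr.
  set (r := sqrt (t ^ 2 - 4 * dl)) in *.
  assert (Hprod : (t - r) / 2 * ((t + r) / 2) = dl) by nra.
  assert (Hrt : r < t) by nra.
  assert (Hgap : (1 - (t - r) / 2) * ((t + r) / 2 - 1) > 0) by nra.
  repeat split; nra.
Qed.

Definition slope_between (lo hi : R) (p q : pt) : Prop :=
  exists m, lo <= m <= hi /\ snd q - snd p = m * (fst q - fst p).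

Lemma slope_between_sub lo hi p q e1 e2 :
  slope_between lo hi p q -> segment p q e1 -> segment p q e2 -> slope_between lo hi e1 e2.
Proof.
  intros (m & Hm & Hsl) [r1 [_ ->]] [r2 [_ ->]]. exists m. split; [exact Hm|].
  unfold padd, pscale, psub; cbn [fst snd].
  transitivity ((r2 - r1) * (snd q - snd p)); [ring|rewrite Hsl; ring].
Qed.

Lemma harmonic_split x y L R : 0 < x -> 0 < y -> 0 <= L -> 0 <= R ->
  x * y / (x + y) * (L + R) <= x * L \/ x * y / (x + y) * (L + R) <= y * R.
Proof.
  intros Hx Hy HL HR.
  assert (Hh : x * y / (x + y) * (L + R) * (x + y) = x * (y * L) + y * (x * R)) by (field; lra).
  destruct (Rle_dec (y * R) (x * L)) as [H|H]; [left|right];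
    apply (Rmult_le_reg_r (x + y)); nra.
Qed.

Ltac pos := repeat first [lra | apply Rplus_lt_0_compat | apply Rmult_lt_0_compat].
Ltac nonneg := repeat first [lra | apply Rplus_le_le_0_compat | apply Rmult_le_pos].

(* [a, b, s, u] are [lamLs, lamLu, |lamRs|, |lamRu|], so that K = [-a, s]. *)
Set Implicit Arguments.
Record eigen_coords (xi : param) (a b s u : R) : Prop := {
  ec_lamLs : lamLs xi = a; ec_lamLu : lamLu xi = b; ec_lamRu : lamRu xi = - u;
  ec_tauL : tauL xi = a + b; ec_deltaL : deltaL xi = a * b;
  ec_tauR : tauR xi = - (s + u); ec_deltaR : deltaR xi = s * u;
  ec_a : 0 < a < 1; ec_b : 1 < b; ec_s : 0 < s < 1; ec_u : 1 < u }.
Unset Implicit Arguments.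

Lemma eigen_coords_of_Phi xi : in_Phi xi ->
  eigen_coords xi (lamLs xi) (lamLu xi) (- lamRs xi) (- lamRu xi).
Proof.
  intros (HtL & HdL & HtR & HdR).
  destruct (saddle_roots (tauL xi) (deltaL xi)) as (HaL & HbL & HpL); [lra|lra|].
  destruct (saddle_roots (- tauR xi) (deltaR xi)) as (HsR & HuR & HpR); [lra|lra|].
  replace ((- tauR xi) ^ 2) with (tauR xi ^ 2) in HsR, HuR, HpR by ring.
  constructor; unfold lamLs, lamLu, lamRs, lamRu, discL, discR; lra.
Qed.

Section Dynamics.

Variables (xi : param) (a b s u : R).
Hypothesis E : eigen_coords xi a b s u.
Hypothesis phi_pos : 0 < phi xi.

Ltac bounds := destruct (ec_a E), (ec_s E); pose proof (ec_b E); pose proof (ec_u E).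

Lemma f_left p : fst p <= 0 -> f xi p = branch (a + b) (a * b) p.
Proof. intros Hp. rewrite f_on_left, (ec_tauL E), (ec_deltaL E) by exact Hp. reflexivity. Qed.

Lemma f_right p : 0 <= fst p -> f xi p = branch (- (s + u)) (s * u) p.
Proof. intros Hp. rewrite f_on_right, (ec_tauR E), (ec_deltaR E) by exact Hp. reflexivity. Qed.

Definition xD := 1 / (1 - a).
Definition kfD := b * (1 - (s + u) * xD) - s * u * xD.

Definition side_YD := affine_fun (- a) (-1) (a * xD).
Definition side_fDB := affine_fun b 1 (- kfD).
Definition side_DfD := affine_fun (- (s * u)) (a + s + u) (s * u * xD).

(* This is Omega itself; only the inclusion [Omega_sub_trap] is needed. *)
Definition trap (z : pt) : Prop := 0 <= side_YD z /\ 0 <= side_fDB z /\ 0 <= side_DfD z.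

Lemma xD_spec : xD * (1 - a) = 1 /\ 1 < xD.
Proof.
  bounds. assert (Hx : xD * (1 - a) = 1) by (unfold xD; field; lra).
  split; [exact Hx|nra].
Qed.

Lemma D_eq : D xi = (xD, 0).
Proof. unfold D. rewrite (ec_lamLs E). reflexivity. Qed.

Lemma f_D : f xi (D xi) = (1 - (s + u) * xD, - (s * u) * xD).
Proof.
  pose proof xD_spec. rewrite D_eq, f_right by (cbn; lra).
  unfold branch; cbn [fst snd]. f_equal; ring.
Qed.

Lemma Y_eq : Y xi = (- xD / (b - 1), a * b * xD / (b - 1)).
Proof.
  bounds. unfold Y, xD. rewrite (ec_tauL E), (ec_deltaL E).
  assert (a + b - a * b - 1 <> 0) by nra.
  f_equal; field; lra.
Qed.

Lemma side_fDB_Y : side_fDB (Y xi) * (b - 1) = - ((b - 1) * kfD + b).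
Proof.
  bounds. pose proof xD_spec. rewrite Y_eq. unfold side_fDB, affine_fun; cbn [fst snd].
  field_simplify; [|lra]. nra.
Qed.

Lemma sides_f_left z : fst z <= 0 ->
  side_YD (f xi z) = a * side_YD z /\
  side_fDB (f xi z) = b * side_fDB z - (b - 1) * side_fDB (Y xi) /\
  side_DfD (f xi z) = s * u * side_YD z - (a * b * (a + s + u) + b * s * u) * fst z.
Proof.
  intros Hz. bounds.
  assert (HY : (b - 1) * side_fDB (Y xi) = - ((b - 1) * kfD + b)) by (rewrite <- side_fDB_Y; ring).
  rewrite HY, f_left by exact Hz.
  unfold side_YD, side_fDB, side_DfD, kfD, xD, affine_fun, branch; cbn [fst snd].
  repeat split; field; lra.
Qed.

Lemma sides_f_right z : 0 <= fst z ->
  side_YD (f xi z) = a * side_YD z + (a * (a + s + u) + s * u) * fst z /\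
  (a + s + u) * side_fDB (f xi z) =
    b * side_DfD z + ((a + s + u) * (b * (s + u) + s * u) - b * s * u) * (xD - fst z) /\
  side_DfD (f xi z) = s * u * side_YD z.
Proof.
  intros Hz. bounds. rewrite f_right by exact Hz.
  unfold side_YD, side_fDB, side_DfD, kfD, xD, affine_fun, branch; cbn [fst snd].
  repeat split; field; lra.
Qed.

Lemma phi_eq : phi xi = (1 - a) * ((b - 1) * kfD + b).
Proof.
  bounds. unfold phi, kfD, xD.
  rewrite (ec_lamLu E), (ec_tauR E), (ec_deltaL E), (ec_deltaR E). field. lra.
Qed.

Lemma sides_at_Y : side_YD (Y xi) = 0 /\ side_fDB (Y xi) < 0 /\ 0 < side_DfD (Y xi).
Proof.
  bounds. destruct xD_spec as [_ HxD].
  assert (Hmargin : 0 < (b - 1) * kfD + b).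
  { rewrite phi_eq in phi_pos. apply (Rmult_lt_reg_l (1 - a)); lra. }
  split; [|split].
  - rewrite Y_eq. unfold side_YD, affine_fun; cbn [fst snd]. field. lra.
  - pose proof side_fDB_Y. nra.
  - rewrite Y_eq. unfold side_DfD, affine_fun; cbn [fst snd].
    assert (0 < xD / (b - 1)) by (apply Rdiv_lt_0_compat; lra).
    replace (- (s * u) * (- xD / (b - 1)) + (a + s + u) * (a * b * xD / (b - 1)) + s * u * xD)
      with ((s * u + (a + s + u) * (a * b)) * (xD / (b - 1)) + s * u * xD) by (field; lra).
    pos.
Qed.

Lemma sides_at_D : side_YD (D xi) = 0 /\ 0 <= side_fDB (D xi) /\ side_DfD (D xi) = 0.
Proof.
  bounds. destruct xD_spec as [_ HxD]. rewrite D_eq.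
  unfold side_YD, side_fDB, side_DfD, kfD, affine_fun; cbn [fst snd].
  repeat split; [ring| |ring].
  replace (b * xD + 1 * 0 + - (b * (1 - (s + u) * xD) - s * u * xD))
    with (b * (xD - 1) + b * (s + u) * xD + s * u * xD) by ring.
  left. pos.
Qed.

Lemma sides_at_fD :
  0 <= side_YD (f xi (D xi)) /\ side_fDB (f xi (D xi)) = 0 /\ side_DfD (f xi (D xi)) = 0.
Proof.
  bounds. destruct xD_spec as [HxD1 HxD]. rewrite f_D.
  unfold side_YD, side_fDB, side_DfD, kfD, affine_fun; cbn [fst snd].
  repeat split; [|ring|].
  - replace (- a * (1 - (s + u) * xD) + -1 * (- (s * u) * xD) + a * xD)
      with (a * (xD - 1) + a * (s + u) * xD + s * u * xD) by ring.
    left. pos.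
  - replace (- (s * u) * (1 - (s + u) * xD) + (a + s + u) * (- (s * u) * xD) + s * u * xD)
      with (s * u * (xD * (1 - a) - 1)) by ring.
    rewrite HxD1. ring.
Qed.

Lemma B_on_YD : segment (Y xi) (D xi) (B xi) /\ side_fDB (B xi) = 0.
Proof.
  bounds. destruct sides_at_Y as (_ & HY & _). destruct sides_at_D as (_ & HD & _).
  assert (Hcross : forall z, cross (psub z (f xi (D xi))) (evLs xi) = - side_fDB z).
  { intros z. rewrite f_D. unfold evLs, side_fDB, kfD, cross, psub, affine_fun; cbn [fst snd].
    rewrite (ec_lamLs E), (ec_tauL E). ring. }
  unfold B. rewrite <- (Ropp_involutive (side_fDB _)), <- Hcross.
  split; [apply line_inter_between|apply Ropp_eq_0_compat; apply line_inter_between];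
    rewrite ?Hcross; lra.
Qed.

Lemma Omega_sub_trap z : Omega xi z -> trap z.
Proof.
  destruct sides_at_Y as (HY1 & _ & HY3). destruct sides_at_D as (HD1 & HD2 & HD3).
  destruct sides_at_fD as (HfD1 & HfD2 & HfD3). destruct B_on_YD as [HB HB2].
  assert (HB1 : 0 <= side_YD (B xi))
    by (apply (segment_affine_nonneg _ _ _ _ _ _ HB); fold side_YD; lra).
  assert (HB3 : 0 <= side_DfD (B xi))
    by (apply (segment_affine_nonneg _ _ _ _ _ _ HB); fold side_DfD; lra).
  intros Hz. split; [|split]; apply (triangle_affine_nonneg _ _ _ _ _ _ _ Hz);
    fold side_YD side_fDB side_DfD; lra.
Qed.

Lemma trap_fst_le z : trap z -> fst z <= xD.
Proof.
  bounds. intros (HYD & _ & HDfD). unfold side_YD, side_DfD, affine_fun in *.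
  assert (0 <= (a + s + u) * (- a * fst z + -1 * snd z + a * xD)) by (apply Rmult_le_pos; lra).
  assert (0 < a * (a + s + u) + s * u) by nra.
  nra.
Qed.

Lemma f_trap z : trap z -> trap (f xi z).
Proof.
  bounds. intros Hz. pose proof (trap_fst_le z Hz) as HxD.
  destruct sides_at_Y as (_ & HY & _). destruct Hz as (HYD & HfDB & HDfD).
  destruct (Rle_dec (fst z) 0) as [Hl|Hr].
  - destruct (sides_f_left z Hl) as (E1 & E2 & E3).
    split; [|split].
    + rewrite E1. nonneg.
    + rewrite E2. assert (0 <= b * side_fDB z) by nonneg.
      assert (0 <= (b - 1) * - side_fDB (Y xi)) by nonneg. lra.
    + rewrite E3. assert (0 <= s * u * side_YD z) by nonneg.
      assert (0 <= (a * b * (a + s + u) + b * s * u) * - fst z) by nonneg. lra.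
  - destruct (sides_f_right z ltac:(lra)) as (E1 & E2 & E3).
    assert (0 < (a + s + u) * (b * (s + u) + s * u) - b * s * u).
    { replace ((a + s + u) * (b * (s + u) + s * u) - b * s * u)
        with (a * (b * (s + u) + s * u) + b * (s * s + s * u + u * u) + s * u * (s + u)) by ring.
      pos. }
    split; [|split].
    + rewrite E1. nonneg.
    + apply (Rmult_le_reg_l (a + s + u)); [lra|]. rewrite Rmult_0_r, E2. nonneg.
    + rewrite E3. nonneg.
Qed.

Lemma trap_fst_bounded : exists M, forall z z', trap z -> trap z' -> fst z' - fst z <= M.
Proof.
  bounds. exists (xD - (kfD - a * xD) / (b - a)). intros z z' Hz Hz'.
  pose proof (trap_fst_le z' Hz'). destruct Hz as (HYD & HfDB & _).
  unfold side_YD, side_fDB, affine_fun in HYD, HfDB.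
  assert (Hlow : (kfD - a * xD) / (b - a) * (b - a) <= fst z * (b - a)).
  { replace ((kfD - a * xD) / (b - a) * (b - a)) with (kfD - a * xD) by (field; lra). lra. }
  apply Rmult_le_reg_r in Hlow; lra.
Qed.

Definition yV := - u / (1 + u).
Definition xW := 1 / (s * (1 + u)).

Lemma yV_spec : yV * (1 + u) = - u /\ -1 < yV < 0.
Proof.
  bounds. assert (HyV : yV * (1 + u) = - u) by (unfold yV; field; lra).
  split; [exact HyV|nra].
Qed.

Lemma V_eq : V xi = (0, yV).
Proof. bounds. unfold V, yV. rewrite (ec_lamRu E). f_equal. field. lra. Qed.

Lemma finv_V : finv xi (V xi) = (xW, yV + u * xW).
Proof.
  bounds. destruct yV_spec as (_ & _ & HyV). rewrite V_eq. unfold finv.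
  destruct (Rle_dec 0 yV) as [|_]; [lra|].
  unfold xW, yV. rewrite (ec_tauR E), (ec_deltaR E). f_equal; field; lra.
Qed.

Lemma trap_y_axis y : a + s < 1 -> trap (0, y) -> yV < y.
Proof.
  bounds. destruct xD_spec as [_ HxD]. destruct yV_spec as [HyV _].
  intros Has (_ & _ & HDfD). unfold side_DfD, affine_fun in HDfD; cbn [fst snd] in HDfD.
  assert (Hid : u * (a + s + u) - (1 + u) * (s * u * xD) = u * xD * ((u + a) * (1 - a - s)))
    by (unfold xD; field; lra).
  assert (0 < u * xD * ((u + a) * (1 - a - s))) by pos.
  assert (0 <= (1 + u) * (- (s * u) * 0 + (a + s + u) * y + s * u * xD)) by nonneg.
  assert (Hpos : 0 < (a + s + u) * ((1 + u) * y + u)) by lra.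
  assert (0 < (1 + u) * y + u).
  { apply (Rmult_lt_reg_l (a + s + u)); lra. }
  apply (Rmult_lt_reg_r (1 + u)); lra.
Qed.

Lemma yW_pos : 0 < yV + u * xW.
Proof.
  bounds. destruct yV_spec as (HyV & _).
  assert (Hsu : 0 < s * (1 + u)) by pos.
  apply (Rmult_lt_reg_r (s * (1 + u))); [exact Hsu|]. rewrite Rmult_0_l.
  replace ((yV + u * xW) * (s * (1 + u))) with (u * (1 - s)) by (unfold xW; field_simplify; nra).
  pos.
Qed.

Lemma below_W qx : a + s < 1 -> 0 < qx -> (s + u) * qx < 1 -> a * qx <= yV + u * xW.
Proof.
  bounds. destruct yV_spec as (HyV & _). intros Has Hq Hsmall.
  assert (Hsu : 0 < s * (1 + u)) by pos.
  apply (Rmult_le_reg_r (s * (1 + u))); [exact Hsu|].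
  replace ((yV + u * xW) * (s * (1 + u))) with (u * (1 - s)) by (unfold xW; field_simplify; nra).
  assert (s < u * u) by nra.
  assert (qx * (s * (1 + u)) <= u) by nra.
  nra.
Qed.

Lemma transversal_V py qx : yV < py -> py <= yV + u * xW -> 1 + yV <= qx ->
  transversal (0, py) (qx, 0) (V xi) (finv xi (V xi)).
Proof.
  bounds. destruct yV_spec as (HyV & HyV1 & HyV0). intros Hpy HpyW Hqx.
  assert (Hsu : 0 < s * (1 + u)) by pos.
  assert (HxW : xW * (s * (1 + u)) = 1) by (unfold xW; field; lra).
  assert (0 < xW) by nra. pose proof yW_pos.
  rewrite finv_V, V_eq. apply transversal_axes_graph; nra.
Qed.

Definition Jb := b * u ^ 2 / (b + u).

Lemma J1_eq : J1 xi = Jb.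
Proof.
  bounds. unfold J1, Jb. rewrite (ec_lamLu E), (ec_lamRu E), Rabs_left by lra.
  rewrite Ropp_involutive. f_equal. ring.
Qed.

Definition growth := Rmin b (Rmin u Jb).

Lemma growth_spec : 0 < growth /\ growth <= b /\ growth <= u /\ growth <= Jb.
Proof.
  bounds.
  assert (0 < Jb) by (unfold Jb; apply Rdiv_lt_0_compat; [apply Rmult_lt_0_compat, pow_lt|]; lra).
  unfold growth. repeat split.
  - apply Rmin_glb_lt; [lra|apply Rmin_glb_lt; lra].
  - apply Rmin_l.
  - eapply Rle_trans; [apply Rmin_r|apply Rmin_l].
  - eapply Rle_trans; [apply Rmin_r|apply Rmin_r].
Qed.

Lemma K_invariant_left m : - a <= m <= s -> - a <= - (a * b) / (a + b + m) <= s.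
Proof.
  bounds. intros Hm.
  assert (Hc : - (a * b) / (a + b + m) * (a + b + m) = - (a * b)) by (field; lra).
  split; nra.
Qed.

Lemma K_invariant_right m : - a <= m <= s -> - a <= s * u / (s + u - m) <= s.
Proof.
  bounds. intros Hm.
  assert (Hc : s * u / (s + u - m) * (s + u - m) = s * u) by (field; lra).
  split; nra.
Qed.

Section Pieces.

Variable alpha : pt -> Prop.
Hypothesis alpha_trap : forall z, alpha z -> trap z.
Hypothesis small_stable : a + s < 1.

Lemma image_iter_trap n z : image_iter xi n alpha z -> trap z.
Proof.
  revert z. induction n as [|n IH]; intros z [p [Hp ->]].
  - exact (alpha_trap p Hp).
  - apply f_trap, IH. exists p. split; [exact Hp|reflexivity].
Qed.

Definition K_piece (n : nat) (p q : pt) : Prop :=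
  fst p < fst q /\ slope_between (- a) s p q /\
  (forall z, segment p q z -> image_iter xi n alpha z).

Lemma K_piece_sub n p q e1 e2 : K_piece n p q -> segment p q e1 -> segment p q e2 ->
  fst e1 < fst e2 -> K_piece n e1 e2.
Proof.
  intros (_ & Hsl & Himg) H1 H2 H12. split; [exact H12|split].
  - exact (slope_between_sub _ _ _ _ _ _ Hsl H1 H2).
  - intros z Hz. exact (Himg z (segment_sub _ _ _ _ _ H1 H2 Hz)).
Qed.

Lemma K_piece_y_axis n p q y : K_piece n p q -> segment p q (0, y) -> yV < y.
Proof.
  intros (_ & _ & Himg) Hy. exact (trap_y_axis y small_stable (image_iter_trap n _ (Himg _ Hy))).
Qed.

Lemma K_piece_left n p q : K_piece n p q -> fst q <= 0 ->
  K_piece (S n) (f xi p) (f xi q) /\ b * (fst q - fst p) <= fst (f xi q) - fst (f xi p).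
Proof.
  bounds. intros (Hlt & (m & Hm & Hsl) & Himg) Hq. assert (Hp : fst p <= 0) by lra.
  assert (Himg' : forall z, segment (f xi p) (f xi q) z -> image_iter xi (S n) alpha z).
  { intros z Hz. destruct (f_segment_left xi p q z Hp Hq Hz) as [z' [Hz' ->]].
    exact (image_iter_f _ _ _ _ (Himg z' Hz')). }
  rewrite (f_left p Hp), (f_left q Hq) in *.
  destruct (branch_slope (a + b) (a * b) m p q Hsl) as [Hdx Hdy].
  rewrite Hdx. split; [split; [|split]|nra].
  - nra.
  - exists (- (a * b) / (a + b + m)). split; [exact (K_invariant_left m Hm)|].
    rewrite Hdy, Hdx. field. lra.
  - exact Himg'.
Qed.

Lemma K_piece_right n p q : K_piece n p q -> 0 <= fst p ->
  K_piece (S n) (f xi q) (f xi p) /\ u * (fst q - fst p) <= fst (f xi p) - fst (f xi q).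
Proof.
  bounds. intros (Hlt & (m & Hm & Hsl) & Himg) Hp. assert (Hq : 0 <= fst q) by lra.
  assert (Himg' : forall z, segment (f xi q) (f xi p) z -> image_iter xi (S n) alpha z).
  { intros z Hz. destruct (f_segment_right xi p q z Hp Hq (segment_sym _ _ _ Hz)) as [z' [Hz' ->]].
    exact (image_iter_f _ _ _ _ (Himg z' Hz')). }
  rewrite (f_right p Hp), (f_right q Hq) in *.
  destruct (branch_slope (- (s + u)) (s * u) m p q Hsl) as [Hdx Hdy].
  assert (Hdx' : fst (branch (- (s + u)) (s * u) p) - fst (branch (- (s + u)) (s * u) q)
    = (s + u - m) * (fst q - fst p)) by lra.
  rewrite Hdx'. split; [split; [|split]|nra].
  - nra.
  - exists (s * u / (s + u - m)). split; [exact (K_invariant_right m Hm)|].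
    rewrite Hdx'. replace (snd (branch (- (s + u)) (s * u) p) - snd (branch (- (s + u)) (s * u) q))
      with (s * u * (fst q - fst p)) by lra. field. lra.
  - exact Himg'.
Qed.


Definition spans_axes : Prop :=
  exists (n : nat) (py qx : R), (1 <= n)%nat /\
    (forall z, segment (0, py) (qx, 0) z -> image_iter xi n alpha z) /\
    transversal (0, py) (qx, 0) (V xi) (finv xi (V xi)).

Lemma spans_axes_of_piece n P qx : K_piece n P (qx, 0) -> fst P <= 0 -> (1 <= n)%nat ->
  1 + yV <= qx -> a * qx <= yV + u * xW \/ snd P <= 0 -> spans_axes.
Proof.
  bounds. destruct yV_spec as (_ & HyV1 & _). pose proof yW_pos.
  intros HK HP Hn Hqx Hend. pose proof HK as (Hlt & Hsl & Himg). cbn [fst] in Hlt.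
  destruct (segment_meets_y_axis P (qx, 0)) as [e He]; cbn [fst]; [lra|lra|].
  pose proof (K_piece_y_axis n P (qx, 0) e HK He) as HeV.
  assert (HeW : e <= yV + u * xW).
  { destruct Hend as [Hend|Hend].
    - destruct (slope_between_sub _ _ _ _ _ _ Hsl He (segment_end P (qx, 0))) as (m & Hm & Hm').
      cbn [fst snd] in Hm'. nra.
    - destruct (segment_affine 0 1 0 _ _ _ He) as [r [Hr He']].
      unfold affine_fun in He'; cbn [fst snd] in He'. nra. }
  exists n, e, qx. split; [exact Hn|split].
  - intros z Hz. exact (Himg z (segment_sub _ _ _ _ _ He (segment_end _ _) Hz)).
  - exact (transversal_V e qx HeV HeW Hqx).
Qed.

Lemma spans_axes_of_fold n P qx : K_piece n P (qx, 0) -> fst P <= 0 -> (1 <= n)%nat ->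
  1 + yV <= qx -> spans_axes.
Proof.
  bounds. destruct yV_spec as (_ & HyV1 & _). intros HK HP Hn Hqx.
  destruct (Rlt_dec ((s + u) * qx) 1) as [Hsmall|Hlarge].
  { apply (spans_axes_of_piece n P qx HK HP Hn Hqx). left. apply below_W; lra. }
  (* Otherwise f maps the part right of the y-axis onto a segment from a point with
     nonpositive coordinates to (e + 1, 0). *)
  destruct (segment_meets_y_axis P (qx, 0)) as [e He]; cbn [fst]; [lra|lra|].
  pose proof (K_piece_y_axis n P (qx, 0) e HK He) as HeV.
  assert (HKe : K_piece n (0, e) (qx, 0))
    by (apply (K_piece_sub n P (qx, 0)); [exact HK|exact He|apply segment_end|cbn; lra]).
  destruct (K_piece_right n _ _ HKe) as [HKf _]; [cbn; lra|].
  rewrite f_y_axis, (f_right (qx, 0)) in HKf by (cbn; lra).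
  unfold branch in HKf; cbn [fst snd] in HKf.
  assert (0 <= s * u * qx) by nonneg.
  apply (spans_axes_of_piece (S n) _ (e + 1) HKf); cbn [fst snd]; [lra|lia|lra|right; lra].
Qed.

Lemma fold_at_y_axis n p q : K_piece n p q -> fst p < 0 < fst q ->
  exists c, yV < c /\
    K_piece (S n) (f xi p) (c + 1, 0) /\ b * - fst p <= c + 1 - fst (f xi p) /\
    K_piece (S n) (f xi q) (c + 1, 0) /\ u * fst q <= c + 1 - fst (f xi q).
Proof.
  intros HK Hpq. destruct (segment_meets_y_axis p q) as [c Hc]; [lra|lra|].
  pose proof (K_piece_y_axis n p q c HK Hc) as HcV.
  destruct (K_piece_left n p (0, c)) as [HKp Wp];
    [apply (K_piece_sub n p q); [exact HK|apply segment_start|exact Hc|cbn; lra]|cbn; lra|].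
  destruct (K_piece_right n (0, c) q) as [HKq Wq];
    [apply (K_piece_sub n p q); [exact HK|exact Hc|apply segment_end|cbn; lra]|cbn; lra|].
  rewrite f_y_axis in HKp, Wp, HKq, Wq. cbn [fst] in Wp, Wq.
  exists c. split; [|split; [|split; [|split]]]; assumption || lra.
Qed.

Lemma spans_axes_or_grows n p q : K_piece n p q ->
  spans_axes \/ exists n' p' q', K_piece n' p' q' /\ growth * (fst q - fst p) <= fst q' - fst p'.
Proof.
  bounds. intros HK. pose proof HK as (Hlt & _ & _).
  destruct growth_spec as (Hg0 & Hgb & Hgu & HgJ).
  destruct (Rle_dec (fst q) 0) as [Hq|Hq].
  { right. destruct (K_piece_left n p q HK Hq) as [HK' W]. do 3 eexists. split; [exact HK'|nra]. }
  destruct (Rle_dec 0 (fst p)) as [Hp|Hp].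
  { right. destruct (K_piece_right n p q HK Hp) as [HK' W]. do 3 eexists. split; [exact HK'|nra]. }
  destruct (fold_at_y_axis n p q HK) as (c & Hc & HKp & Wp & HKq & Wq); [lra|].
  destruct (Rle_dec (fst (f xi p)) 0) as [Hfp|Hfp].
  { left. apply (spans_axes_of_fold (S n) _ (c + 1) HKp Hfp); [lia|lra]. }
  destruct (Rle_dec (fst (f xi q)) 0) as [Hfq|Hfq].
  { left. apply (spans_axes_of_fold (S n) _ (c + 1) HKq Hfq); [lia|lra]. }
  (* Both halves of the fold now lie right of the y-axis; the wider of their images wins. *)
  right.
  destruct (K_piece_right (S n) _ _ HKp) as [HKp' Wp']; [lra|].
  destruct (K_piece_right (S n) _ _ HKq) as [HKq' Wq']; [lra|]. cbn [fst] in Wp', Wq'.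
  assert (HJ : u * b * (u * u) / (u * b + u * u) = Jb) by (unfold Jb; field; split; nra).
  assert (Hw : growth * (fst q - fst p) <= Jb * (- fst p + fst q)) by nra.
  destruct (harmonic_split (u * b) (u * u) (- fst p) (fst q)) as [Hsplit|Hsplit];
    try pos; try lra; rewrite HJ in Hsplit; do 3 eexists; split.
  - exact HKp'.
  - assert (u * (b * - fst p) <= u * (c + 1 - fst (f xi p))) by (apply Rmult_le_compat_l; lra). nra.
  - exact HKq'.
  - assert (u * (u * fst q) <= u * (c + 1 - fst (f xi q))) by (apply Rmult_le_compat_l; lra). nra.
Qed.

Lemma spans_axes_or_grows_pow n p q k : K_piece n p q ->
  spans_axes \/
  exists n' p' q', K_piece n' p' q' /\ growth ^ k * (fst q - fst p) <= fst q' - fst p'.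
Proof.
  intros HK. destruct growth_spec as (Hg0 & _). induction k as [|k IH].
  - right. exists n, p, q. split; [exact HK|cbn; lra].
  - destruct IH as [Hs|(n' & p' & q' & HK' & Hw)]; [left; exact Hs|].
    destruct (spans_axes_or_grows n' p' q' HK') as [Hs|(n'' & p'' & q'' & HK'' & Hw')];
      [left; exact Hs|].
    right. exists n'', p'', q''. split; [exact HK''|]. cbn [pow].
    assert (growth * (growth ^ k * (fst q - fst p)) <= growth * (fst q' - fst p'))
      by (apply Rmult_le_compat_l; lra). lra.
Qed.

Lemma spans_axes_of_K_piece n p q : 1 < Jb -> K_piece n p q -> spans_axes.
Proof.
  bounds. intros HJ HK. destruct growth_spec as (Hg0 & Hgb & Hgu & HgJ).
  assert (Hg1 : 1 < growth) by (unfold growth; repeat apply Rmin_glb_lt; lra).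
  destruct trap_fst_bounded as [M HM]. pose proof HK as (Hlt & _ & _).
  destruct (Pow_x_infinity growth ltac:(rewrite Rabs_right; lra) (M / (fst q - fst p) + 1))
    as [k Hk].
  specialize (Hk k (le_n k)). rewrite Rabs_right in Hk by (apply Rle_ge, pow_le; lra).
  destruct (spans_axes_or_grows_pow n p q k HK) as [Hs|(n' & p' & q' & (_ & _ & Himg) & Hw)];
    [exact Hs|exfalso].
  pose proof (HM p' q' (image_iter_trap _ _ (Himg _ (segment_start _ _)))
                       (image_iter_trap _ _ (Himg _ (segment_end _ _)))).
  assert (growth ^ k * (fst q - fst p) >= (M / (fst q - fst p) + 1) * (fst q - fst p))
    by (apply Rle_ge, Rmult_le_compat_r; lra).
  assert ((M / (fst q - fst p) + 1) * (fst q - fst p) = M + (fst q - fst p)) by (field; lra).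
  lra.
Qed.

End Pieces.
End Dynamics.

Lemma K_piece_of_segment xi a s (A0 A1 : pt) : A0 <> A1 ->
  (exists m, - a <= m <= s /\ cross (psub A1 A0) (1, m) = 0) ->
  exists p q, K_piece xi a s (segment A0 A1) 0 p q.
Proof.
  intros Hneq (m & Hm & Hcross). destruct A0 as [x0 y0], A1 as [x1 y1].
  unfold cross, psub in Hcross; cbn [fst snd] in Hcross.
  assert (Hslope : snd (x1, y1) - snd (x0, y0) = m * (fst (x1, y1) - fst (x0, y0)))
    by (cbn; lra).
  destruct (Rtotal_order x0 x1) as [Hlt|[Heq|Hgt]].
  - exists (x0, y0), (x1, y1). split; [exact Hlt|split].
    + exists m. split; [exact Hm|exact Hslope].
    + intros z Hz. exists z. split; [exact Hz|reflexivity].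
  - exfalso. apply Hneq. subst x1. f_equal. lra.
  - exists (x1, y1), (x0, y0). split; [exact Hgt|split].
    + exists m. split; [exact Hm|cbn in *; lra].
    + intros z Hz. exists z. split; [exact (segment_sym _ _ _ Hz)|reflexivity].
Qed.

Theorem lemma5p3 (xi : param) (A0 A1 : pt) :
  in_Phi_BYG xi ->
  J1 xi > 1 ->
  lamLs xi + Rabs (lamRs xi) < 1 ->
  A0 <> A1 ->
  (* alpha = [A0, A1] has slope m in K = [-lamLs, |lamRs|] *)
  (exists m, - lamLs xi <= m <= Rabs (lamRs xi) /\
             cross (psub A1 A0) (1, m) = 0) ->
  (forall z, segment A0 A1 z -> Omega xi z) ->
  exists (n : nat) (py qx : R),
    (1 <= n)%nat /\
    (forall z, segment (0, py) (qx, 0) z -> image_iter xi n (segment A0 A1) z) /\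
    transversal (0, py) (qx, 0) (V xi) (finv xi (V xi)).
Proof.
  intros [HPhi Hphi] HJ Hsmall Hneq Hslope HOmega.
  pose proof (eigen_coords_of_Phi xi HPhi) as E.
  assert (HRs : Rabs (lamRs xi) = - lamRs xi) by (apply Rabs_left; pose proof (ec_s E); lra).
  rewrite HRs in Hsmall, Hslope.
  destruct (K_piece_of_segment xi _ _ A0 A1 Hneq Hslope) as (p & q & HK).
  refine (spans_axes_of_K_piece xi _ _ _ _ E Hphi (segment A0 A1) _ Hsmall 0 p q _ HK).
  - intros z Hz. exact (Omega_sub_trap xi _ _ _ _ E Hphi z (HOmega z Hz)).
  - rewrite <- (J1_eq xi _ _ _ _ E). exact HJ.
Qed.
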